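(* Let $f:\mathbb{T}\to\mathbb{R}$ and $\nu\ge0$. For all $t\in\mathbb{T}^\kappa$, $$({}_h\Delta_{\rho(b)}^{-\nu}f^{\Delta})(t-\nu h)=\frac{\nu}{\Gamma(\nu+1)}(b+\nu h-\sigma(t))_h^{(\nu-1)}f(b)+\bigl[\tau\mapsto({}_h\Delta_b^{-\nu}f)(\tau-\nu h)\bigr]^{\Delta}(t),$$ where on the left the right fractional $h$-sum with upper endpoint $\rho(b)=b-h$ is applied to $f^\Delta$ (a function on $\mathbb{T}^\kappa$).
   Context: Let $a\in\mathbb{R}$, $h>0$, $b=a+kh$ with $k\in\mathbb{N}$, $\mathbb{T}=\{a,a+h,\dots,b\}$, $\mathbb{T}^\kappa=\mathbb{T}\setminus\{b\}$, $\sigma(t)=t+h$, $\rho(t)=t-h$, $g^\Delta(t)=(g(t+h)-g(t))/h$. For $c\le d$ in $\{a+jh:j\in\mathbb{Z}\}$, $\int_c^dg(s)\Delta s:=h\sum_{j=0}^{(d-c)/h-1}g(c+jh)$. $h$-factorial: $x_h^{(y)}:=h^y\Gamma(\frac{x}{h}+1)/\Gamma(\frac{x}{h}+1-y)$ (division at a pole yields zero). For $\nu\ge0$, $c\in\mathbb{T}$ and $g$ defined on $\{s\in\mathbb{T}:s\le c\}$, the right fractional $h$-sum with upper endpoint $c$ (written at the shifted point) is, for $t\in\mathbb{T}$, $t\le c$: $({}_h\Delta_c^{-\nu}g)(t-\nu h):=h^\nu g(t)+\frac{\nu}{\Gamma(\nu+1)}\int_{\sigma(t)}^{\sigma(c)}(s+\nu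 h-\sigma(t))_h^{(\nu-1)}g(s)\Delta s.$ *)

From Stdlib Require Import Reals Lra ClassicalEpsilon Arith Factorial.
Open Scope R_scope.

Fixpoint sumR (n : nat) (g : nat -> R) : R :=
  match n with O => 0 | S m => sumR m g + g m end.

Fixpoint prodR (n : nat) (g : nat -> R) : R :=
  match n with O => 1 | S m => prodR m g * g m end.

(* Gauss' product for the reciprocal Gamma function (entire):
   1/Gamma(z) = lim_n z(z+1)...(z+n) / (n! (n+1)^z). *)
Definition rGamma_seq (z : R) (n : nat) : R :=
  prodR (S n) (fun i => z + INR i) / (INR (fact n) * Rpower (INR (S n)) z).

(* reciprocal Gamma: the limit of the Gauss product (it always exists) *)
Definition rGamma (z : R) : R :=
  epsilon (inhabits 0) (fun l => Un_cv (rGamma_seq z) l).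

(* Euler Gamma function (the value at poles, where rGamma = 0, is irrelevant) *)
Definition Gamma (z : R) : R := / rGamma z.

(* h-factorial x_h^(y) = h^y Gamma(x/h+1)/Gamma(x/h+1-y); division by Gamma at a
   pole is encoded as multiplication by 1/Gamma = rGamma = 0, i.e. yields 0. *)
Definition hfact (h x y : R) : R :=
  Rpower h y * Gamma (x / h + 1) * rGamma (x / h + 1 - y).

(* points of the time scale a + j h *)
Definition tpt (a h : R) (j : nat) : R := a + INR j * h.

(* delta integral from c to c + n h : h * sum_{i=0}^{n-1} g (c + i h) *)
Definition dint (h c : R) (n : nat) (g : R -> R) : R :=
  h * sumR n (fun i => g (c + INR i * h)).

Definition hdelta (h : R) (g : R -> R) (t : R) : R := (g (t + h) - g t) / h.

(* right fractional h-sum with upper endpoint c = a + jc h, evaluated at the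
   shifted point t - nu h where t = a + jt h (jt <= jc):
   h^nu g(t) + nu/Gamma(nu+1) * int_{sigma t}^{sigma c} (s + nu h - sigma t)_h^(nu-1) g(s) Delta s *)
Definition frac_sum (h nu a : R) (jc : nat) (g : R -> R) (jt : nat) : R :=
  let t := tpt a h jt in
  Rpower h nu * g t
  + nu / Gamma (nu + 1)
    * dint h (t + h) (jc - jt) (fun s => hfact h (s + nu * h - (t + h)) (nu - 1) * g s).

From Stdlib Require Import Reals Lra Lia.
Open Scope R_scope.

(* On the grid t_m = a + m h the right fractional h-sum with
   upper endpoint t_jc, evaluated at t_jt - nu h, reads
     h^nu g(t_jt) + nu/Gamma(nu+1) * h * sum_{i < jc-jt} w_i g(t_{jt+1+i}),
   with the kernel w_i = (i h + nu h)_h^(nu-1), which depends only on the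
   distance i between the summation point and sigma(t) (frac_sum_kernel).
   Writing t = t_j, b = t_k = t_{j+1+n} and g_i = f(t_{j+1+i}), the left-hand
   side is then h^nu f^Delta(t) + c h sum_{i<n} w_i (g_{i+1} - g_i)/h, while
   the delta derivative of tau |-> (h Delta_b^{-nu} f)(tau - nu h) at t is
   h^nu f^Delta(t) + c (sum_{i<n} w_i g_{i+1} - sum_{i<=n} w_i g_i).
   Discrete summation by parts (sumR_by_parts) shows that the two differ
   exactly by the boundary term c w_n g_n = c (b + nu h - sigma t)_h^(nu-1) f(b).
   No property of the h-factorial itself is needed. *)

Lemma sumR_ext (n : nat) (u v : nat -> R) :
  (forall i, u i = v i) -> sumR n u = sumR n v.
Proof.
  intros Huv; induction n as [|n IH]; simpl; [reflexivity|].
  now rewrite IH, Huv.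
Qed.

Lemma sumR_scale (n : nat) (c : R) (u : nat -> R) :
  sumR n (fun i => c * u i) = c * sumR n u.
Proof. induction n as [|n IH]; simpl; [ring|]. rewrite IH; ring. Qed.

Lemma sumR_by_parts (n : nat) (w g : nat -> R) :
  sumR n (fun i => w i * (g (S i) - g i))
  = sumR n (fun i => w i * g (S i)) - sumR (S n) (fun i => w i * g i) + w n * g n.
Proof.
  induction n as [|n IH]; simpl in *; [ring|].
  rewrite IH; ring.
Qed.

Lemma tpt_add (a h : R) (i m : nat) : tpt a h (i + m) = tpt a h i + INR m * h.
Proof. unfold tpt; rewrite plus_INR; ring. Qed.

Lemma hdelta_tpt (a h : R) (g : R -> R) (m : nat) :
  hdelta h g (tpt a h m) = (g (tpt a h (S m)) - g (tpt a h m)) / h.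
Proof.
  unfold hdelta; f_equal; f_equal; f_equal.
  rewrite <- Nat.add_1_r, tpt_add; simpl; ring.
Qed.

Definition frac_kernel (h nu : R) (i : nat) : R :=
  hfact h (INR i * h + nu * h) (nu - 1).

Lemma frac_sum_kernel (h nu a : R) (jc jt : nat) (g : R -> R) :
  frac_sum h nu a jc g jt
  = Rpower h nu * g (tpt a h jt)
    + nu / Gamma (nu + 1)
      * (h * sumR (jc - jt) (fun i => frac_kernel h nu i * g (tpt a h (jt + S i)))).
Proof.
  unfold frac_sum, dint, frac_kernel.
  do 3 f_equal; apply sumR_ext; intro i.
  rewrite tpt_add, S_INR.
  f_equal; [f_equal|f_equal]; ring.
Qed.

Theorem mainTheorem8 (a h nu : R) (k : nat) (f : R -> R)
  (hh : 0 < h) (hnu : 0 <= nu) (j : nat) (hj : (j < k)%nat) :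
  let b := tpt a h k in
  let t := tpt a h j in
  frac_sum h nu a (k - 1) (hdelta h f) j
  = nu / Gamma (nu + 1) * hfact h (b + nu * h - (t + h)) (nu - 1) * f b
    + (frac_sum h nu a k f (S j) - frac_sum h nu a k f j) / h.
Proof.
  intros b t; subst b t.
  assert (Hn : exists n, k = (j + S n)%nat) by (exists (k - S j)%nat; lia).
  destruct Hn as [n Hk].
  set (w := frac_kernel h nu).
  set (g := fun i => f (tpt a h (j + S i))).
  (* b = t_{j+1+n}, so the boundary term is w_n g_n *)
  assert (Hboundary : hfact h (tpt a h k + nu * h - (tpt a h j + h)) (nu - 1) * f (tpt a h k)
                      = w n * g n).
  { unfold w, g, frac_kernel; rewrite Hk, !tpt_add, S_INR.
    f_equal; f_equal; ring. }
  rewrite (Rmult_assoc (nu / Gamma (nu + 1))), Hboundary, !frac_sum_kernel, hdelta_tpt.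
  replace (k - 1 - j)%nat with n by lia.
  replace (k - S j)%nat with n by lia.
  replace (k - j)%nat with (S n) by lia.
  rewrite (sumR_ext n _ (fun i => / h * (w i * (g (S i) - g i))))
    by (intro i; unfold w, g; rewrite hdelta_tpt, plus_n_Sm; field; lra).
  rewrite (sumR_ext n (fun i => frac_kernel h nu i * f (tpt a h (S j + S i)))
             (fun i => w i * g (S i)))
    by (intro i; unfold w, g; now rewrite Nat.add_succ_l, plus_n_Sm).
  rewrite (sumR_ext (S n) (fun i => frac_kernel h nu i * f (tpt a h (j + S i)))
             (fun i => w i * g i)) by reflexivity.
  replace (f (tpt a h (S j))) with (g 0%nat) by (unfold g; now rewrite Nat.add_1_r).
  rewrite sumR_scale, sumR_by_parts.
  set (c := nu / Gamma (nu + 1)); field; lra.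
Qed.
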